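(* Let $(\mathcal V,\mathcal W,\lambda)$ be a FTvN system where $\mathcal V$ is finite dimensional with $\dim(\mathcal V)\ge 2$, and suppose that for $x,y\in\mathcal V$, $0=\langle x,y\rangle=\langle\lambda(x),\lambda(y)\rangle$ implies $x=0$ or $y=0$. Then $\{0\}$ and $\mathcal V$ are the only spectral cones in $\mathcal V$. Consequently, for any nonzero $u\in\mathcal V$, the convex cone generated by $[u]$ equals $\mathcal V$.
   Context: A Fan-Theobald-von Neumann (FTvN) system is a triple $(\mathcal V,\mathcal W,\lambda)$ where $\mathcal V,\mathcal W$ are real inner product spaces and $\lambda:\mathcal V\to\mathcal W$ is a map such that: (A1) $\|\lambda(x)\|=\|x\|$ for all $x$; (A2) $\langle x,y\rangle\le\langle\lambda(x),\lambda(y)\rangle$ for all $x,y$; (A3) for every $c\in\mathcal V$ and $q\in\lambda(\mathcal V)$ there exists $x$ with $\lambda(x)=q$ and $\langle c,x\rangle=\langle\lambda(c),\lambda(x)\rangle$. The $\lambda$-orbit of $u$ is $[u]=\{x:\lambda(x)=\lambda(u)\}$; a set $E$ is spectral if $x\in E\Rightarrow[x]\subseteq E$. A spectral cone is a (nonempty) spectral set that is also a convex cone. *)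

From mathcomp Require Import all_boot all_order all_algebra.
From mathcomp Require Import reals.
Set Implicit Arguments. Unset Strict Implicit. Unset Printing Implicit Defensive.
Import Order.TTheory GRing.Theory Num.Theory.
Local Open Scope ring_scope.

Definition is_inner_product (R : realType) (V : lmodType R)
    (ip : V -> V -> R) : Prop :=
  [/\ (forall x y, ip x y = ip y x),
      (forall a x y z, ip (a *: x + y) z = a * ip x z + ip y z)
    & (forall x, x != 0 -> 0 < ip x x)].

Definition ipnorm (R : realType) (V : lmodType R) (ip : V -> V -> R) (x : V) : R :=
  Num.sqrt (ip x x).

Definition FTvN_system (R : realType) (V W : lmodType R)
    (ipV : V -> V -> R) (ipW : W -> W -> R) (lam : V -> W) : Prop :=
  [/\ is_inner_product ipV, is_inner_product ipW,
      (forall x, ipnorm ipW (lam x) = ipnorm ipV x),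
      (forall x y, ipV x y <= ipW (lam x) (lam y))
    & (forall (c : V) (u : V), exists x : V,
          lam x = lam u /\ ipV c x = ipW (lam c) (lam x))].

Definition lam_orbit (R : realType) (V W : lmodType R) (lam : V -> W) (u : V) : V -> Prop :=
  fun x => lam x = lam u.

Definition spectral (R : realType) (V W : lmodType R) (lam : V -> W) (E : V -> Prop) : Prop :=
  forall x, E x -> forall y, lam_orbit lam x y -> E y.

Definition convex_cone (R : realType) (V : lmodType R) (K : V -> Prop) : Prop :=
  [/\ exists x, K x,
      (forall x y, K x -> K y -> K (x + y))
    & (forall (a : R) x, 0 <= a -> K x -> K (a *: x))].

Definition spectral_cone (R : realType) (V W : lmodType R) (lam : V -> W)
    (K : V -> Prop) : Prop :=
  spectral lam K /\ convex_cone K.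

Definition cone_hull (R : realType) (V : lmodType R) (S : V -> Prop) : V -> Prop :=
  fun x => exists (n : nat) (a : 'I_n -> R) (v : 'I_n -> V),
    [/\ (forall i, 0 <= a i), (forall i, S (v i)) & x = \sum_(i < n) a i *: v i].

From mathcomp Require Import all_boot all_order all_algebra.
From mathcomp Require Import reals boolp classical_sets topology normedtype.
From mathcomp Require Import zify ring lra.
Import Order.TTheory GRing.Theory Num.Theory numFieldNormedType.Exports.
Set Implicit Arguments. Unset Strict Implicit. Unset Printing Implicit Defensive.
Local Open Scope ring_scope.

(* For u != 0 the support function g c := <lam c, lam u> of the orbit [u]
   is sublinear (A2, A3), and it vanishes only at 0: a maximiser x in [u]
   with <c, x> = <lam c, lam x> = 0 is nonzero by (A1), so the hypothesis
   forces c = 0.  Since V \ {0} is connected when dim V >= 2 and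
   g w + g (-w) >= g 0 = 0, the continuous function g is positive off 0.
   Hence the dual of the cone generated by [u] is {0}, and a convex cone
   with trivial dual in a finite-dimensional space is the whole space; this
   is proved by projecting along one direction at a time, the
   two-dimensional case being a supremum-of-slopes argument.  Finally a
   spectral cone containing u != 0 contains the cone generated by [u]. *)

Section InnerProduct.
Variables (R : realType) (V : lmodType R) (ip : V -> V -> R).
Hypothesis ip_inner : is_inner_product ip.

Lemma ipC x y : ip x y = ip y x.
Proof. by case: ip_inner. Qed.

Lemma ipDl x y z : ip (x + y) z = ip x z + ip y z.
Proof. by case: ip_inner => _ lin _; have := lin 1 x y z; rewrite scale1r mul1r. Qed.

Lemma ip0l z : ip 0 z = 0.
Proof. by have := ipDl 0 0 z; rewrite addr0; lra. Qed.

Lemma ipZl a x z : ip (a *: x) z = a * ip x z.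
Proof. by case: ip_inner => _ lin _; rewrite -[a *: x]addr0 lin ip0l addr0. Qed.

Lemma ipDr x y z : ip z (x + y) = ip z x + ip z y.
Proof. by rewrite ipC ipDl ![ip _ z]ipC. Qed.

Lemma ipZr a x z : ip z (a *: x) = a * ip z x.
Proof. by rewrite ipC ipZl ipC. Qed.

Lemma ip_gt0 x : x != 0 -> 0 < ip x x.
Proof. by case: ip_inner => _ _; apply. Qed.

Lemma ip_eq0 x : ip x x = 0 -> x = 0.
Proof.
by move=> xx0; apply/eqP; apply: contraTT isT => /ip_gt0; rewrite xx0 ltxx.
Qed.

End InnerProduct.

Lemma convex_cone0 (R : realType) (V : lmodType R) (K : V -> Prop) :
  convex_cone K -> K 0.
Proof. by case=> [[x Kx] _ KZ]; rewrite -(scale0r x); exact: KZ. Qed.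

Lemma cone_hull_convex (R : realType) (V : lmodType R) (S : V -> Prop) :
  convex_cone (cone_hull S).
Proof.
split.
- exists 0, 0%N, (fun _ => 0), (fun _ => 0).
  by split=> [[i]|[i]|]; rewrite ?ltn0 ?big_ord0.
- move=> _ _ [m [a [v [a0 Sv ->]]]] [n [b [w [b0 Sw ->]]]].
  exists (m + n)%N.
  exists (fun i => match split i with inl j => a j | inr j => b j end).
  exists (fun i => match split i with inl j => v j | inr j => w j end).
  split=> [i|i|]; [by case: (split i) | by case: (split i) |].
  by rewrite big_split_ord /=; congr (_ + _); apply: eq_bigr => i _;
    rewrite ?(unsplitK (inl _ i)) ?(unsplitK (inr _ i)).
- move=> k _ k0 [n [a [v [a0 Sv ->]]]].
  exists n, (fun i => k * a i), v; split=> // [i|]; first exact: mulr_ge0.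
  by rewrite scaler_sumr; apply: eq_bigr => i _; rewrite scalerA.
Qed.

Lemma sub_cone_hull (R : realType) (V : lmodType R) (S : V -> Prop) x :
  S x -> cone_hull S x.
Proof.
by move=> Sx; exists 1%N, (fun _ => 1), (fun _ => x); rewrite big_ord1 scale1r.
Qed.

Lemma cone_hull_min (R : realType) (V : lmodType R) (S K : V -> Prop) :
  convex_cone K -> (forall x, S x -> K x) -> forall x, cone_hull S x -> K x.
Proof.
move=> Kcone SK _ [n [a [v [a0 Sv ->]]]]; have [_ KD KZ] := Kcone.
by apply: big_ind => [|x y|i _]; [exact: convex_cone0 | exact: KD | exact/KZ/SK].
Qed.

Lemma cone2_meets_open_quadrant (R : realType) (P : R -> R -> Prop) :
  (forall a b a' b', P a b -> P a' b' -> P (a + a') (b + b')) ->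
  (forall k a b, 0 <= k -> P a b -> P (k * a) (k * b)) ->
  (forall al be, (al != 0) || (be != 0) -> exists a b, P a b /\ 0 < al * a + be * b) ->
  exists a b, [/\ P a b, 0 < a & 0 < b].
Proof.
move=> PD PZ Pdual; apply: contrapT => noQ.
have PQ a b : P a b -> 0 < a -> b <= 0.
  by move=> Pab a0; rewrite leNgt; apply/negP => b0; apply: noQ; exists a, b.
pose S : set R := fun r => exists a b, [/\ P a b, 0 < a & r = b / a].
have supS : has_sup S.
  split; last first.
    by exists 0 => _ [a [b [Pab a0 ->]]]; rewrite pmulr_lle0 ?invr_gt0 // (PQ a b).
  have [a [b [Pab]]] : exists a b, P a b /\ 0 < 1 * a + 0 * b.
    by apply: Pdual; rewrite oner_neq0.
  rewrite mul0r addr0 mul1r => a0.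
  by exists (b / a), a, b.
set s := sup S.
(* s is the largest slope b / a over P /\ {a > 0}; mixing a point of P with
   a nearly extremal one shows that no point of P lies above the line
   b = s a, i.e. the nonzero functional (a, b) |-> b - s a is nonpositive
   on P. *)
have slope_le a b : P a b -> b <= s * a.
  move=> Pab; rewrite leNgt; apply/negP => slope_gt.
  pose M := `|a| + 1; pose eps := (b - s * a) / M.
  have M0 : 0 < M by rewrite ltr_wpDl.
  have eps0 : 0 < eps by rewrite divr_gt0 // subr_gt0.
  have [_ [a' [b' [P' a'0 ->]]] near_s] := sup_adherent eps0 supS.
  pose t := a' / M.
  have tM : t * M = a' by rewrite divfK ?gt_eqF.
  have teps : t * (b - s * a) = eps * a' by rewrite /t /eps; ring.
  have t0 : 0 < t by rewrite divr_gt0.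
  have a''0 : 0 < a' + t * a.
    by have := ler_norm (- a); rewrite normrN /M in tM *; nra.
  have : S ((b' + t * b) / (a' + t * a)).
    by exists (a' + t * a), (b' + t * b); split=> //; apply/PD/PZ => //; exact: ltW.
  move/(sup_upper_bound supS); rewrite -/s ler_pdivrMr // => le_s.
  move: near_s; rewrite -/s ltr_pdivlMr // => lt_s; nra.
have [a [b [Pab]]] : exists a b, P a b /\ 0 < - s * a + 1 * b.
  by apply: Pdual; rewrite oner_neq0 orbT.
by have := slope_le a b Pab; nra.
Qed.

Lemma lipschitz_continuous (R : realType) (h : R -> R) (k : R) :
  (forall s t, `|h t - h s| <= k * `|t - s|) -> continuous h.
Proof.
move=> hk x; apply/cvgrPdist_lt => e e0.
have k1 : 0 < `|k| + 1 by rewrite ltr_wpDl.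
have ek : 0 < e / (`|k| + 1) by rewrite divr_gt0.
near=> y; rewrite distrC; apply: (le_lt_trans (hk x y)); rewrite distrC.
have : `|x - y| < e / (`|k| + 1).
  near: y; have := @near_ball _ _ x _ ek.
  by apply: filterS => z; rewrite -ball_normE.
rewrite ltr_pdivlMr //.
by have := normr_ge0 (x - y); have := ler_norm k; nra.
Unshelve. all: by end_near.
Qed.

Lemma exists_notin_vline (K : fieldType) (V : vectType K) (c : V) :
  (2 <= \dim (fullv : {vspace V}))%N -> exists w, w \notin <[c]>%VS.
Proof.
move=> dimV; apply: contrapT => /forallNP all_in.
have : (fullv <= <[c]>)%VS by apply/subvP => w _; apply/negPn/negP; exact: all_in.
by move/dimvS; rewrite dim_vline => /(leq_trans dimV); case: (c != 0).
Qed.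

Lemma segment_neq0 (K : fieldType) (V : vectType K) (c d : V) (t : K) :
  c != 0 -> d \notin <[c]>%VS -> c + t *: (d - c) != 0.
Proof.
move=> c0 dc; apply/eqP => seg0.
have [t0|t0] := eqVneq t 0.
  by move: seg0 c0; rewrite t0 scale0r addr0 => ->; rewrite eqxx.
move: dc; have -> : d = (1 - t^-1) *: c.
  apply: (scalerI t0); rewrite scalerA mulrBr mulr1 mulfV // scalerBl scale1r.
  by apply/eqP; rewrite -subr_eq0 -seg0 scalerBr opprB addrCA.
by rewrite memvZ ?memv_line.
Qed.

Section Sublinear.
Variables (R : realType) (V : vectType R) (g : V -> R).
Hypotheses (gD : forall a b, g (a + b) <= g a + g b)
           (gZ : forall t c, 0 <= t -> g (t *: c) = t * g c).

Lemma sublinear0 : g 0 = 0.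
Proof. by rewrite -(scale0r (0 : V)) gZ ?mul0r. Qed.

Lemma sublinear_line_lipschitz c e s t :
  `|g (c + t *: e) - g (c + s *: e)| <= (`|g e| + `|g (- e)|) * `|t - s|.
Proof.
wlog st : s t / s <= t.
  move=> hwlog; have [/hwlog //|/ltW ts] := leP s t.
  by rewrite distrC (distrC t); exact: hwlog.
have ts0 : 0 <= t - s by rewrite subr_ge0.
have up : g (c + t *: e) <= g (c + s *: e) + (t - s) * g e.
  rewrite -gZ //; have -> : c + t *: e = (c + s *: e) + (t - s) *: e.
    by rewrite scalerBl addrACA subrr addr0.
  exact: gD.
have down : g (c + s *: e) <= g (c + t *: e) + (t - s) * g (- e).
  rewrite -gZ //; have -> : c + s *: e = (c + t *: e) + (t - s) *: (- e).
    by rewrite scalerN scalerBl opprB addrACA subrr addr0.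
  exact: gD.
rewrite [`|t - s|]ger0_norm // ler_distl.
have := ler_norm (g e); have := ler_norm (g (- e)).
have := normr_ge0 (g e); have := normr_ge0 (g (- e)).
by move: (`|g e|) (`|g (- e)|) => ? ? ? ? ? ?; apply/andP; split; nra.
Qed.

Hypotheses (g_neq0 : forall c, c != 0 -> g c != 0)
           (dimV : (2 <= \dim (fullv : {vspace V}))%N).

Lemma sublinear_gt0_off_vline c : exists2 d, d \notin <[c]>%VS & 0 < g d.
Proof.
have [w wc] := exists_notin_vline c dimV.
have w0 : w != 0 by apply: contraNneq wc => ->; rewrite mem0v.
have [gw|gw] := ltP 0 (g w); first by exists w.
exists (- w); first by rewrite memvN.
have : g w < 0 by rewrite lt_neqAle g_neq0.
have : 0 <= g w + g (- w) by rewrite -sublinear0 -(subrr w); exact: gD.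
lra.
Qed.

Lemma sublinear_gt0 c : c != 0 -> 0 < g c.
Proof.
move=> c0; rewrite lt_neqAle eq_sym g_neq0 //= leNgt; apply/negP => gc.
have [d dc gd] := sublinear_gt0_off_vline c.
pose h t := g (c + t *: (d - c)).
have hcont : continuous h.
  by apply: lipschitz_continuous => s t; exact: sublinear_line_lipschitz.
have [|t _ /eqP] := @IVT _ h 0 1 0 ler01 (continuous_subspaceT hcont).
  by rewrite /h scale0r addr0 scale1r subrKC ge_min le_max (ltW gc) (ltW gd) orbT.
by apply/negP/g_neq0/segment_neq0.
Qed.

End Sublinear.

Section TrivialDualCone.
Variables (R : realType) (V : vectType R) (ip : V -> V -> R).
Hypothesis ip_inner : is_inner_product ip.

Definition perp (U : {vspace V}) x := forall w, w \in U -> ip x w = 0.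

Definition trivial_dual (U : {vspace V}) (C : V -> Prop) :=
  forall c, perp U c -> c != 0 -> exists2 x, C x & 0 < ip x c.

Lemma perp_addvP U v x : perp (U + <[v]>)%VS x <-> perp U x /\ ip x v = 0.
Proof.
split=> [xUv|[xU xv] _ /memv_addP [w wU [_ /vlineP [k ->] ->]]].
  split=> [w wU|]; apply: xUv; first exact: (subvP (addvSl U _)).
  exact: (subvP (addvSr U _)) (memv_line v).
by rewrite (ipDr ip_inner) (ipZr ip_inner) (xU _ wU) xv mulr0 addr0.
Qed.

Lemma dimv_add_perp U v :
  perp U v -> v != 0 -> \dim (U + <[v]>) = (\dim U).+1.
Proof.
move=> vU v0; rewrite dimv_disjoint_sum ?dim_vline ?v0 ?addn1 //.
apply/eqP; rewrite -subv0; apply/subvP => w /memv_capP [wU /vlineP [k wkv]].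
rewrite memv0; apply/eqP/(ip_eq0 ip_inner).
by rewrite {1}wkv (ipZl ip_inner) (vU _ wU) mulr0.
Qed.

Lemma orth_lin_indep c v a b : ip c v = 0 -> c != 0 -> v != 0 ->
  a *: c + b *: v = 0 -> a = 0 /\ b = 0.
Proof.
move=> cv c0 v0 comb0.
have vc : ip v c = 0 by rewrite (ipC ip_inner).
have : ip (a *: c + b *: v) c = 0 /\ ip (a *: c + b *: v) v = 0.
  by rewrite comb0 !(ip0l ip_inner).
rewrite !(ipDl ip_inner) !(ipZl ip_inner) cv vc !mulr0 addr0 add0r.
move=> [/eqP + /eqP]; rewrite !mulf_eq0 !(gt_eqF (ip_gt0 ip_inner _)) // !orbF.
by move=> /eqP -> /eqP ->.
Qed.

Lemma perpZ U a x : perp U x -> perp U (a *: x).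
Proof. by move=> xU w wU; rewrite (ipZl ip_inner) (xU _ wU) mulr0. Qed.

Definition proj_perp v x := x - (ip x v / ip v v) *: v.

Lemma ip_proj_perp v x w :
  ip (proj_perp v x) w = ip x w - ip x v / ip v v * ip v w.
Proof. by rewrite (ipDl ip_inner) -scaleNr (ipZl ip_inner) mulNr. Qed.

Lemma proj_perp_perp v x : v != 0 -> ip (proj_perp v x) v = 0.
Proof.
by move=> v0; rewrite ip_proj_perp divfK ?subrr ?(gt_eqF (ip_gt0 ip_inner _)).
Qed.

Lemma proj_perpD v x y : proj_perp v (x + y) = proj_perp v x + proj_perp v y.
Proof. by rewrite /proj_perp (ipDl ip_inner) mulrDl scalerDl opprD addrACA. Qed.

Lemma proj_perpZ v a x : proj_perp v (a *: x) = a *: proj_perp v x.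
Proof. by rewrite /proj_perp (ipZl ip_inner) scalerBr scalerA mulrA. Qed.

Lemma proj_perp_eq0 v x : proj_perp v x = 0 -> x = (ip x v / ip v v) *: v.
Proof. by move/eqP; rewrite subr_eq0 => /eqP. Qed.

Definition proj_cone v (C : V -> Prop) y :=
  exists x, [/\ C x, 0 <= ip x v & y = proj_perp v x].

Section ProjCone.
Variables (U : {vspace V}) (v : V) (C : V -> Prop).
Hypotheses (C_cone : convex_cone C) (C_perp : forall x, C x -> perp U x)
           (C_dual : trivial_dual U C) (v_perp : perp U v) (v0 : v != 0).

Lemma proj_cone_convex : convex_cone (proj_cone v C).
Proof.
have [_ CD CZ] := C_cone; split.
- exists 0, 0; split; first exact: convex_cone0.
    by rewrite (ip0l ip_inner).
  by rewrite /proj_perp (ip0l ip_inner) mul0r scale0r subr0.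
- move=> _ _ [x [Cx xv ->]] [y [Cy yv ->]].
  exists (x + y); rewrite (ipDl ip_inner) proj_perpD.
  by split=> //; [exact: CD | exact: addr_ge0].
- move=> a _ a0 [x [Cx xv ->]].
  exists (a *: x); rewrite (ipZl ip_inner) proj_perpZ.
  by split=> //; [exact: CZ | exact: mulr_ge0].
Qed.

Lemma perp_proj_perp x : perp U x -> perp (U + <[v]>)%VS (proj_perp v x).
Proof.
move=> xU; apply/perp_addvP; split; last exact: proj_perp_perp.
by move=> w wU; rewrite ip_proj_perp (xU _ wU) (v_perp wU) mulr0 subr0.
Qed.

Lemma proj_cone_perp y : proj_cone v C y -> perp (U + <[v]>)%VS y.
Proof. by move=> [x [Cx _ ->]]; exact/perp_proj_perp/C_perp. Qed.

Lemma proj_cone_trivial_dual : trivial_dual (U + <[v]>)%VS (proj_cone v C).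
Proof.
move=> c /perp_addvP [cU cv] c0; have vc : ip v c = 0 by rewrite (ipC ip_inner).
pose P a b := exists x, [/\ C x, a = ip x c & b = ip x v].
have [_ [_ [[x [Cx -> ->]] xc xv]]] : exists a b, [/\ P a b, 0 < a & 0 < b].
  have [_ CD CZ] := C_cone; apply: cone2_meets_open_quadrant.
  - move=> _ _ _ _ [x [Cx -> ->]] [y [Cy -> ->]].
    by exists (x + y); rewrite !(ipDl ip_inner); split=> //; exact: CD.
  - move=> k _ _ k0 [x [Cx -> ->]].
    by exists (k *: x); rewrite !(ipZl ip_inner); split=> //; exact: CZ.
  - move=> al be albe; pose z := al *: c + be *: v.
    have zU : perp U z.
      move=> w wU; rewrite (ipDl ip_inner) !(ipZl ip_inner).
      by rewrite (cU _ wU) (v_perp wU) !mulr0 addr0.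
    have z0 : z != 0.
      apply/eqP => /(orth_lin_indep cv c0 v0) [al0 be0].
      by move: albe; rewrite al0 be0 eqxx.
    have [x Cx xz] := C_dual zU z0.
    exists (ip x c), (ip x v); split; first by exists x.
    by rewrite -!(ipZr ip_inner) -(ipDr ip_inner).
exists (proj_perp v x); first by exists x; split=> //; exact: ltW.
by rewrite ip_proj_perp vc mulr0 subr0.
Qed.

(* If the projected cone fills the hyperplane, the projection of some
   z in C with <z, v> > 0 is cancelled inside C, leaving a positive
   multiple of v. *)
Lemma mem_proj_cone_full :
  (forall y, perp (U + <[v]>)%VS y -> proj_cone v C y) -> C v.
Proof.
move=> Cv_full; have [_ CD CZ] := C_cone.
have [z Cz zv] := C_dual v_perp v0.
have [x [Cx xv pxz]] : proj_cone v C (- proj_perp v z).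
  by apply/Cv_full; rewrite -scaleN1r; exact/perpZ/perp_proj_perp/C_perp.
have vv0 : 0 < ip v v by exact: ip_gt0.
have xzv : 0 < ip (x + z) v / ip v v by rewrite divr_gt0 // (ipDl ip_inner) ltr_wpDl.
have /proj_perp_eq0 xzE : proj_perp v (x + z) = 0 by rewrite proj_perpD -pxz addNr.
rewrite -[v](scalerK (lt0r_neq0 xzv)) -xzE; apply: CZ; last exact: CD.
by rewrite invr_ge0 ltW.
Qed.
End ProjCone.

Lemma cone_perp_full U C : convex_cone C -> (forall x, C x -> perp U x) ->
  trivial_dual U C -> forall v, perp U v -> C v.
Proof.
move=> + + + v; have [n] := ubnP (\dim (fullv : {vspace V}) - \dim U).
elim: n U C v => // n IH U C v codimU C_cone C_perp C_dual v_perp.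
have [->|v0] := eqVneq v 0; first exact: convex_cone0.
apply: (mem_proj_cone_full C_cone C_perp C_dual v_perp v0) => y y_perp.
apply: (IH _ _ _ _ (proj_cone_convex v C_cone) (proj_cone_perp C_perp v_perp v0)
          (proj_cone_trivial_dual C_cone C_dual v_perp v0) y_perp).
by have := dimvS (subvf (U + <[v]>)); rewrite dimv_add_perp //; lia.
Qed.

Lemma cone_full_of_trivial_dual C : convex_cone C ->
  (forall c, c != 0 -> exists2 x, C x & 0 < ip x c) -> forall v, C v.
Proof.
have perp0 x : perp 0 x.
  by move=> w; rewrite memv0 => /eqP ->; rewrite (ipC ip_inner) (ip0l ip_inner).
move=> C_cone C_dual v; apply: (cone_perp_full (U := 0%VS)) => //.
by move=> c _; exact: C_dual.
Qed.

End TrivialDualCone.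

Section OrbitSupport.
Variables (R : realType) (V W : lmodType R).
Variables (ipV : V -> V -> R) (ipW : W -> W -> R) (lam : V -> W).
Hypothesis ftvn : FTvN_system ipV ipW lam.

Definition orbit_support u c := ipW (lam c) (lam u).

Lemma orbit_support_ge u c x : lam_orbit lam u x -> ipV c x <= orbit_support u c.
Proof. by case: ftvn => _ _ _ A2 _ ux; rewrite /orbit_support -ux. Qed.

Lemma orbit_support_attained u c :
  exists2 x, lam_orbit lam u x & ipV c x = orbit_support u c.
Proof.
case: ftvn => _ _ _ _ A3; have [x [ux cx]] := A3 c u.
by exists x; rewrite // /orbit_support -ux.
Qed.

Lemma orbit_supportD u a b :
  orbit_support u (a + b) <= orbit_support u a + orbit_support u b.
Proof.
have [ipV_inner _ _ _ _] := ftvn; have [x ux <-] := orbit_support_attained u (a + b).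
by rewrite (ipDl ipV_inner); apply: lerD; exact: orbit_support_ge.
Qed.

Lemma orbit_supportZ u t c :
  0 <= t -> orbit_support u (t *: c) = t * orbit_support u c.
Proof.
move=> t0; have [ipV_inner _ _ _ _] := ftvn.
apply/eqP; rewrite eq_le; apply/andP; split.
  have [x ux <-] := orbit_support_attained u (t *: c).
  by rewrite (ipZl ipV_inner) ler_wpM2l //; exact: orbit_support_ge.
have [x ux <-] := orbit_support_attained u c.
by rewrite -(ipZl ipV_inner); exact: orbit_support_ge.
Qed.

Lemma lam_orbit_neq0 u x : u != 0 -> lam_orbit lam u x -> x != 0.
Proof.
case: ftvn => ipV_inner _ A1 _ _ u0 ux; apply: contra_neq u0 => x0.
have : ipnorm ipV u = 0 by rewrite -A1 -ux A1 x0 /ipnorm (ip0l ipV_inner) sqrtr0.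
move/eqP; rewrite sqrtr_eq0 => uu_le0; apply/eqP.
by apply: contraLR uu_le0 => /(ip_gt0 ipV_inner); rewrite -ltNge.
Qed.

Hypothesis orth_lam_orth :
  forall x y, ipV x y = 0 -> ipW (lam x) (lam y) = 0 -> x = 0 \/ y = 0.

Lemma orbit_support_neq0 u c : u != 0 -> c != 0 -> orbit_support u c != 0.
Proof.
move=> u0 c0; apply/eqP => gc0; have [x ux cx] := orbit_support_attained u c.
have cx0 : ipV c x = 0 by rewrite cx.
have lam_cx0 : ipW (lam c) (lam x) = 0 by rewrite ux.
have [c_eq0|x_eq0] := orth_lam_orth cx0 lam_cx0; first by rewrite c_eq0 eqxx in c0.
by have := lam_orbit_neq0 u0 ux; rewrite x_eq0 eqxx.
Qed.

End OrbitSupport.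

Section SpectralCones.
Variables (R : realType) (V : vectType R) (W : lmodType R).
Variables (ipV : V -> V -> R) (ipW : W -> W -> R) (lam : V -> W).
Hypotheses (ftvn : FTvN_system ipV ipW lam)
           (dimV : (2 <= \dim (fullv : {vspace V}))%N)
           (orth_lam_orth : forall x y,
              ipV x y = 0 -> ipW (lam x) (lam y) = 0 -> x = 0 \/ y = 0).

Lemma orbit_support_gt0 u c : u != 0 -> c != 0 -> 0 < orbit_support ipW lam u c.
Proof.
move=> u0; have gD := orbit_supportD ftvn u; have gZ := orbit_supportZ ftvn u.
apply: (sublinear_gt0 gD gZ _ dimV) => d.
exact: (orbit_support_neq0 ftvn orth_lam_orth u0).
Qed.

Lemma cone_hull_orbit_full u : u != 0 -> forall x, cone_hull (lam_orbit lam u) x.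
Proof.
have [ipV_inner _ _ _ _] := ftvn; move=> u0.
apply: (cone_full_of_trivial_dual ipV_inner (cone_hull_convex _)) => c c0.
have [x ux cx] := orbit_support_attained ftvn u c.
by exists x; [exact: sub_cone_hull | rewrite (ipC ipV_inner) cx orbit_support_gt0].
Qed.

Lemma spectral_cone_full K x : spectral_cone lam K -> K x -> x != 0 -> forall y, K y.
Proof.
move=> [K_spectral K_cone] Kx x0 y.
by apply: (cone_hull_min K_cone) (cone_hull_orbit_full x0 y) => z; exact: K_spectral.
Qed.

End SpectralCones.

Theorem proposition6p9 (R : realType) (V : vectType R) (W : lmodType R)
    (ipV : V -> V -> R) (ipW : W -> W -> R) (lam : V -> W) :
  FTvN_system ipV ipW lam ->
  (2 <= \dim (fullv : {vspace V}))%N ->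
  (forall x y : V, ipV x y = 0 -> ipW (lam x) (lam y) = 0 -> x = 0 \/ y = 0) ->
  (forall K : V -> Prop, spectral_cone lam K ->
     (forall x, K x <-> x = 0) \/ (forall x, K x)) /\
  (forall u : V, u != 0 -> forall x, cone_hull (lam_orbit lam u) x).
Proof.
move=> ftvn dimV orth_lam_orth.
split=> [K K_spectral|]; last exact: (cone_hull_orbit_full ftvn dimV orth_lam_orth).
have [[x Kx x0]|K_trivial] := pselect (exists2 x, K x & x != 0).
  by right; exact: (spectral_cone_full ftvn dimV orth_lam_orth K_spectral Kx x0).
left=> x; split=> [Kx|->]; last exact: convex_cone0 K_spectral.2.
by have [//|x0] := eqVneq x 0; case: K_trivial; exists x.
Qed.
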